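(* Let $r$ be a positive integer, let $G_r=(V,E)$ be the Chimera graph with $E=E_0\cup E_1\cup E_{01}$, and let $c_{uv}\in\mathbb{R}$ for $(u,v)\in E$ and $d_u\in\mathbb{R}$ for $u\in V$ be arbitrary. Let $H^*=\min_{S\in\{-1,1\}^V}\left(\sum_{(u,v)\in E}c_{uv}S_uS_v+\sum_{u\in V}d_uS_u\right)$, and let $A_0=\sum_{(u,v)\in E_0}|c_{uv}|$ and $A_1=\sum_{(u,v)\in E_1}|c_{uv}|$. Then $H^*\le -(A_0+A_1)$.
   Context: The Chimera graph $G_r=(V,E)$: $V=\{(i,j,k,l)\in\mathbb{Z}^4: 1\le i,j\le r,\ 1\le k\le 4,\ l\in\{0,1\}\}$. $E=E_0\cup E_1\cup E_{01}$ (disjoint), where $E_0$ consists of the edges $\{(i,j,k,0),(i+1,j,k,0)\}$ for $1\le i\le r-1$, $1\le j\le r$, $1\le k\le 4$; $E_1$ consists of the edges $\{(i,j,k,1),(i,j+1,k,1)\}$ for $1\le i\le r$, $1\le j\le r-1$, $1\le k\le 4$; and $E_{01}$ consists of the edges $\{(i,j,k_0,0),(i,j,k_1,1)\}$ for $1\le i,j\le r$, $1\le k_0,k_1\le 4$. *)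

From mathcomp Require Import all_boot all_order all_algebra.
From mathcomp Require Import reals.
Set Implicit Arguments. Unset Strict Implicit. Unset Printing Implicit Defensive.
Import Order.TTheory GRing.Theory Num.Theory.
Local Open Scope ring_scope.

(* Vertices of the Chimera graph G_r: (i,j,k,l) with indices shifted to start
   at 0: i, j : 'I_r (paper: 1..r), k : 'I_4 (paper: 1..4), l : bool
   (false = 0, true = 1). *)
Definition cvert (r : nat) : finType := ('I_r * 'I_r * 'I_4 * bool)%type.

Definition vi {r} (u : cvert r) : nat := u.1.1.1.
Definition vj {r} (u : cvert r) : nat := u.1.1.2.
Definition vk {r} (u : cvert r) : nat := u.1.2.
Definition vl {r} (u : cvert r) : bool := u.2.

Definition E0 {r} (u v : cvert r) : bool :=
  [&& ~~ vl u, ~~ vl v, vi v == (vi u).+1, vj v == vj u & vk v == vk u].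
Definition E1 {r} (u v : cvert r) : bool :=
  [&& vl u, vl v, vi v == vi u, vj v == (vj u).+1 & vk v == vk u].
Definition E01 {r} (u v : cvert r) : bool :=
  [&& ~~ vl u, vl v, vi v == vi u & vj v == vj u].
Definition Ech {r} (u v : cvert r) : bool := [|| E0 u v, E1 u v | E01 u v].

Definition spin {R : realType} (b : bool) : R := if b then 1 else -1.

(* Each edge is represented by the ordered pair (u,v) as listed in the paper. *)
Definition energy {R : realType} {r} (c : cvert r -> cvert r -> R)
  (d : cvert r -> R) (S : {ffun cvert r -> bool}) : R :=
  \sum_(p : cvert r * cvert r | Ech p.1 p.2) c p.1 p.2 * spin (S p.1) * spin (S p.2)
  + \sum_(u : cvert r) d u * spin (S u).

Definition Hstar {R : realType} {r} (c : cvert r -> cvert r -> R)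
  (d : cvert r -> R) : R :=
  \big[Num.min/energy c d [ffun => true]]_(S : {ffun cvert r -> bool}) energy c d S.

Definition A0 {R : realType} {r} (c : cvert r -> cvert r -> R) : R :=
  \sum_(p : cvert r * cvert r | E0 p.1 p.2) `|c p.1 p.2|.
Definition A1 {R : realType} {r} (c : cvert r -> cvert r -> R) : R :=
  \sum_(p : cvert r * cvert r | E1 p.1 p.2) `|c p.1 p.2|.

From mathcomp Require Import all_boot all_order all_algebra.
From mathcomp Require Import reals.
From mathcomp Require Import ring.
Import Order.TTheory GRing.Theory Num.Theory.
Local Open Scope ring_scope.

(* Choose spins along every horizontal chain (layer 0) and every vertical
   chain (layer 1) so that each E_0 and E_1 edge contributes -|c_uv|.  Negating
   the whole of layer 0 and/or the whole of layer 1 keeps this property, while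
   averaging over the four resulting configurations kills the E_01 terms (one
   endpoint is negated independently of the other) and the field terms.  The
   minimum is at most this average, which is -(A_0 + A_1). *)

Lemma sum_bool_pair {V : nmodType} (F : bool * bool -> V) :
  \sum_ab F ab = F (true, true) + F (true, false) + (F (false, true) + F (false, false)).
Proof.
transitivity (\sum_a \sum_b F (a, b)); last by rewrite !big_bool.
by rewrite pair_bigA; apply: eq_bigr => -[].
Qed.

Section Spin.
Context {R : realType}.

Lemma spin_addb (x y : bool) : spin (x (+) y) = - (spin x * spin y) :> R.
Proof. by case: x; case: y; rewrite /spin /=; ring. Qed.

Lemma spin_sqr (x : bool) : spin x * spin x = 1 :> R.
Proof. by case: x; rewrite /spin ?mulrNN mulr1. Qed.

Lemma mul_spin_gt0 (e : R) : e * spin (0 < e) = `|e|.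
Proof.
rewrite /spin; have [e_gt0|e_le0] := ltrP 0 e; first by rewrite mulr1 gtr0_norm.
by rewrite mulrN1 ler0_norm.
Qed.

Fixpoint chain_align (e : nat -> R) (m : nat) : bool :=
  if m is m'.+1 then chain_align e m' (+) (0 < e m') else true.

Lemma chain_align_edge (e : nat -> R) (m : nat) :
  e m * spin (chain_align e m) * spin (chain_align e m.+1) = - `|e m|.
Proof.
rewrite /= spin_addb -mul_spin_gt0 -[in RHS](mul1r (e m * _)).
by rewrite -(spin_sqr (chain_align e m)); ring.
Qed.

End Spin.

Section LayerFlips.
Context {R : realType} {r : nat}.
Variables (c : cvert r -> cvert r -> R) (d : cvert r -> R).

Definition layer_flip (ab : bool * bool) (u : cvert r) : bool :=
  if vl u then ab.2 else ab.1.

Definition flip_layers (S : {ffun cvert r -> bool}) (ab : bool * bool) :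
  {ffun cvert r -> bool} := [ffun u => S u (+) layer_flip ab u].

Lemma sum_spin_layer_flip (u : cvert r) :
  \sum_(ab : bool * bool) spin (layer_flip ab u) = 0 :> R.
Proof. by rewrite sum_bool_pair /layer_flip; case: (vl u); rewrite /spin /=; ring. Qed.

Lemma sum_spin2_layer_flip (u v : cvert r) :
  \sum_(ab : bool * bool) spin (layer_flip ab u) * spin (layer_flip ab v) =
  (if vl u == vl v then 4 else 0) :> R.
Proof.
by rewrite sum_bool_pair /layer_flip; case: (vl u); case: (vl v); rewrite /spin /=; ring.
Qed.

Lemma Hstar_le S : Hstar c d <= energy c d S.
Proof. by rewrite /Hstar (bigD1 S) //= ge_min lexx. Qed.

Lemma Hstar_le_mean_flips S :
  4 * Hstar c d <= \sum_(ab : bool * bool) energy c d (flip_layers S ab).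
Proof.
apply: le_trans (ler_sum _ (fun ab _ => Hstar_le (flip_layers S ab))).
by rewrite sumr_const card_prod card_bool mulr_natl.
Qed.

Lemma sum_energy_flip_layers S :
  \sum_(ab : bool * bool) energy c d (flip_layers S ab) =
  4 * \sum_(p | Ech p.1 p.2 && (vl p.1 == vl p.2))
        c p.1 p.2 * spin (S p.1) * spin (S p.2).
Proof.
rewrite big_split /= exchange_big [X in _ + X]exchange_big /=.
rewrite [X in _ + X]big1 ?addr0 => [|u _]; last first.
  transitivity (- (d u * spin (S u)) * \sum_(ab : bool * bool) spin (layer_flip ab u)).
    by rewrite mulr_sumr; apply: eq_bigr => ab _; rewrite ffunE spin_addb; ring.
  by rewrite sum_spin_layer_flip mulr0.
rewrite mulr_sumr big_mkcondr /=; apply: eq_bigr => p _.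
transitivity (c p.1 p.2 * spin (S p.1) * spin (S p.2) *
  \sum_(ab : bool * bool) spin (layer_flip ab p.1) * spin (layer_flip ab p.2)).
  by rewrite mulr_sumr; apply: eq_bigr => ab _; rewrite !ffunE !spin_addb; ring.
by rewrite sum_spin2_layer_flip; case: ifP; rewrite ?mulr0 // mulrC.
Qed.

End LayerFlips.

Lemma Ech_same_layer {r : nat} (u v : cvert r) :
  Ech u v && (vl u == vl v) = E0 u v || E1 u v.
Proof.
by rewrite /Ech /E0 /E1 /E01; case: (vl u); case: (vl v); rewrite /= ?andbF ?andbT ?orbF.
Qed.

Lemma sum_same_layer_edges {R : realType} {r : nat} (F : cvert r * cvert r -> R) :
  \sum_(p | Ech p.1 p.2 && (vl p.1 == vl p.2)) F p =
  \sum_(p | E0 p.1 p.2) F p + \sum_(p | E1 p.1 p.2) F p.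
Proof.
rewrite (bigID (fun p => E0 p.1 p.2)) /=; congr (_ + _); apply: eq_bigl => p.
  by rewrite Ech_same_layer; case: (E0 _ _); rewrite ?andbF.
rewrite Ech_same_layer /E0 /E1.
by case: (vl p.1); case: (vl p.2); rewrite /= ?andbF ?andbT ?orbF ?andbN.
Qed.

Section AlignedSpins.
Context {R : realType} {n : nat}.
Variable (c : cvert n.+1 -> cvert n.+1 -> R).

(* [chain_align e j] only reads [e m] for [m < j <= n], so [inord] never
   falls back to its default value [ord0]. *)
Definition aligned_spins : {ffun cvert n.+1 -> bool} := [ffun u : cvert n.+1 =>
  let: (i, j, k, l) := u in
  if l then chain_align (fun m => c (i, inord m, k, true) (i, inord m.+1, k, true)) j
  else chain_align (fun m => c (inord m, j, k, false) (inord m.+1, j, k, false)) i].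

Lemma aligned_spins_E0 (u v : cvert n.+1) : E0 u v ->
  c u v * spin (aligned_spins u) * spin (aligned_spins v) = - `|c u v|.
Proof.
case: u v => [[[i j] k] l] [[[i' j'] k'] l'].
rewrite /E0 /vi /vj /vk /vl /= => /and5P [/negbTE -> /negbTE -> /eqP ei /eqP ej /eqP ek].
have -> : j' = j by apply: val_inj.
have -> : k' = k by apply: val_inj.
rewrite !ffunE /= ei.
pose e m := c (inord m, j, k, false) (inord m.+1, j, k, false).
have -> : c (i, j, k, false) (i', j, k, false) = e i.
  by rewrite /e inord_val; congr (c _ (_, _, _, _)); apply: val_inj; rewrite /= inordK // -ei.
exact: chain_align_edge.
Qed.

Lemma aligned_spins_E1 (u v : cvert n.+1) : E1 u v ->
  c u v * spin (aligned_spins u) * spin (aligned_spins v) = - `|c u v|.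
Proof.
case: u v => [[[i j] k] l] [[[i' j'] k'] l'].
rewrite /E1 /vi /vj /vk /vl /= => /and5P [-> -> /eqP ei /eqP ej /eqP ek].
have -> : i' = i by apply: val_inj.
have -> : k' = k by apply: val_inj.
rewrite !ffunE /= ej.
pose e m := c (i, inord m, k, true) (i, inord m.+1, k, true).
have -> : c (i, j, k, true) (i, j', k, true) = e j.
  by rewrite /e inord_val; congr (c _ (_, _, _, _)); apply: val_inj; rewrite /= inordK // -ej.
exact: chain_align_edge.
Qed.

Lemma aligned_spins_same_layer_energy :
  \sum_(p | Ech p.1 p.2 && (vl p.1 == vl p.2))
    c p.1 p.2 * spin (aligned_spins p.1) * spin (aligned_spins p.2) = - (A0 c + A1 c).
Proof.
rewrite sum_same_layer_edges opprD /A0 /A1 -!sumrN.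
by congr (_ + _); apply: eq_bigr => p; [move/aligned_spins_E0 | move/aligned_spins_E1].
Qed.

End AlignedSpins.

Theorem lemma1 (R : realType) (r : nat) (hr : (0 < r)%N)
  (c : cvert r -> cvert r -> R) (d : cvert r -> R) :
  Hstar c d <= - (A0 c + A1 c).
Proof.
case: r hr c d => // n _ c d.
have := Hstar_le_mean_flips c d (aligned_spins c).
by rewrite sum_energy_flip_layers aligned_spins_same_layer_energy ler_pM2l.
Qed.
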